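(* Let $A$ be an $n\times n$ complex matrix with eigenvalues, multiplicities, $P_i$, $N_i$, $B(z)$ and $q_i$ as in the context. Then for each $i$, $$P_i=\frac{1}{(n_i-1)!}\frac{d^{n_i-1}}{dz^{n_i-1}}\left(\frac{B(z)}{q_i(z)}\right)\Big|_{z=\lambda_i},$$ and, if $n_i\ge 2$, $$N_iP_i=\frac{1}{(n_i-2)!}\frac{d^{n_i-2}}{dz^{n_i-2}}\left(\frac{B(z)}{q_i(z)}\right)\Big|_{z=\lambda_i}.$$
   Context: For an $n\times n$ complex matrix $A$ with distinct eigenvalues $\lambda_1,\dots,\lambda_m$ and algebraic multiplicities $n_1,\dots,n_m$, let $W_i=\ker(A-\lambda_i\mathbb{1})^{n_i}$ be the generalized eigenspace of $\lambda_i$, so $\mathbb{C}^n=\bigoplus_i W_i$. Let $P_i$ be the projection onto $W_i$ along $\bigoplus_{j\ne i}W_j$, and let $N_i=(A-\lambda_i\mathbb{1})P_i$. Let $p(z)=\det(z\mathbb{1}-A)=\prod_{j}(z-\lambda_j)^{n_j}$, $B(z)=\operatorname{Adj}(z\mathbb{1}-A)$ (adjugate matrix), and $q_i(z)=\prod_{j\ne i}(z-\lambda_j)^{n_j}$, which is nonzero near $\lambda_i$ so $B(z)/q_i(z)$ is analytic near $\lambda_i$. *)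

From HB Require Import structures.
From mathcomp Require Import all_boot all_order all_algebra.
From mathcomp Require Import complex.
From mathcomp Require Import reals.
Set Implicit Arguments. Unset Strict Implicit. Unset Printing Implicit Defensive.
Import Order.TTheory GRing.Theory Num.Theory.
Local Open Scope ring_scope.

(* One step of the quotient rule on a matrix-valued rational function
   F.1 / F.2 (numerator matrix of polynomials, scalar polynomial denominator):
   (M / q)' = (q M' - q' M) / q^2. *)
Definition rat_mx_deriv (C : fieldType) (n : nat)
    (F : 'M[{poly C}]_n * {poly C}) : 'M[{poly C}]_n * {poly C} :=
  (F.2 *: map_mx (fun p => p^`()) F.1 - F.2^`() *: F.1, F.2 ^+ 2).

(* k-th derivative of z |-> M(z) / q(z), evaluated at z = x (meaningful when q.[x] != 0). *)
Definition rat_mx_derivn_at (C : fieldType) (n : nat) (k : nat)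
    (M : 'M[{poly C}]_n) (q : {poly C}) (x : C) : 'M[C]_n :=
  let F := iter k (@rat_mx_deriv C n) (M, q) in
  (F.2.[x])^-1 *: map_mx (fun p => p.[x]) F.1.

Definition in_ker_pow (C : fieldType) (n : nat) (A : 'M[C]_n) (lam : C) (k : nat)
    (v : 'cV[C]_n) : Prop :=
  (A - lam%:M) ^+ k *m v = 0.

(* P is the projection onto W_i along the sum of the W_j, j <> i *)
Definition is_spectral_proj (C : fieldType) (n m : nat) (A : 'M[C]_n)
    (lam : 'I_m -> C) (ns : 'I_m -> nat) (i : 'I_m) (P : 'M[C]_n) : Prop :=
  (forall v, in_ker_pow A (lam i) (ns i) v -> P *m v = v) /\
  (forall j v, j != i -> in_ker_pow A (lam j) (ns j) v -> P *m v = 0).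

From HB Require Import structures.
From mathcomp Require Import all_boot all_order all_algebra.
From mathcomp Require Import complex reals.
From mathcomp Require Import ring zify.
Import Order.TTheory GRing.Theory Num.Theory.
Set Implicit Arguments. Unset Strict Implicit. Unset Printing Implicit Defensive.
Local Open Scope ring_scope.

(* Write char_poly A = (X - c)^k q with q(c) != 0 and N = A - c. As the
   generalized eigenspaces span the whole space, a Bezout relation
   a (X - c)^k + b q = 1 identifies P with (b q)(A); hence N^k P = 0 and
   1 - P = N^k a(A). Multiplying the adjugate identity B(z) (z - A) = char_poly A (z)
   by the finite resolvent expansion Q(z) = sum_(j < k) (z - c)^j N^(k-1-j) P gives
   B P = q Q, while B (1 - P) = B N^k a(A) is divisible by (z - c)^k because
   (z - c)^k - N^k is a multiple of z - A. Hence B / q = Q + (z - c)^k T / q, and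
   the derivatives of order j < k at c are the Taylor coefficients j! N^(k-1-j) P
   of Q; orders k - 1 and k - 2 give P and N P = N P P. *)

Section FracDeriv.
Variable F : fieldType.
Implicit Types (p q : {poly F}) (f g : {poly F} * {poly F}) (x : F).

Definition frac_deriv f := (f.2 * f.1^`() - f.2^`() * f.1, f.2 ^+ 2).

Definition frac_value_at x f := f.2.[x]^-1 * f.1.[x].

Definition frac_derivn_at k p q x := frac_value_at x (iter k frac_deriv (p, q)).

Lemma iter_frac_deriv_den k p q : (iter k frac_deriv (p, q)).2 = q ^+ (2 ^ k).
Proof. by elim: k => [|k /= ->]; rewrite ?expr1 // -exprM expnSr. Qed.

Lemma iter_frac_derivD k p1 p2 q : (iter k frac_deriv (p1 + p2, q)).1 =
  (iter k frac_deriv (p1, q)).1 + (iter k frac_deriv (p2, q)).1.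
Proof. by elim: k => //= k ->; rewrite !iter_frac_deriv_den derivD; ring. Qed.

Lemma frac_derivn_atD k p1 p2 q x :
  frac_derivn_at k (p1 + p2) q x = frac_derivn_at k p1 q x + frac_derivn_at k p2 q x.
Proof.
rewrite /frac_derivn_at /frac_value_at iter_frac_derivD !iter_frac_deriv_den.
by rewrite hornerD mulrDr.
Qed.

Lemma frac_deriv_cross f g : f.1 * g.2 = g.1 * f.2 ->
  (frac_deriv f).1 * (frac_deriv g).2 = (frac_deriv g).1 * (frac_deriv f).2.
Proof.
move=> /eqP; rewrite -subr_eq0 => /eqP fg.
have fg' := congr1 deriv fg; rewrite derivB !derivM deriv0 in fg'.
apply/eqP; rewrite -subr_eq0; apply/eqP.
transitivity (f.2 * g.2 * (f.1^`() * g.2 + f.1 * g.2^`()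
                           - (g.1^`() * f.2 + g.1 * f.2^`()))
   - (f.2^`() * g.2 + f.2 * g.2^`()) * (f.1 * g.2 - g.1 * f.2)); first by rewrite /=; ring.
by rewrite fg fg'; ring.
Qed.

Lemma frac_value_at_cross x f g : f.1 * g.2 = g.1 * f.2 ->
  f.2.[x] != 0 -> g.2.[x] != 0 -> frac_value_at x f = frac_value_at x g.
Proof.
move=> /(congr1 (horner^~ x)); rewrite !hornerM /frac_value_at => fg f0 g0.
have -> : f.1.[x] = g.1.[x] * f.2.[x] / g.2.[x] by rewrite -fg mulfK.
by field; apply/andP.
Qed.

Lemma frac_derivn_at_cross k p1 q1 p2 q2 x : p1 * q2 = p2 * q1 ->
  q1.[x] != 0 -> q2.[x] != 0 -> frac_derivn_at k p1 q1 x = frac_derivn_at k p2 q2 x.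
Proof.
suff: forall f g, f.1 * g.2 = g.1 * f.2 -> f.2.[x] != 0 -> g.2.[x] != 0 ->
    frac_value_at x (iter k frac_deriv f) = frac_value_at x (iter k frac_deriv g).
  by move=> cross; apply: (cross (p1, q1) (p2, q2)).
elim: k => [|k IH] f g fg f0 g0; first exact: frac_value_at_cross.
rewrite !iterSr; apply: IH; rewrite /= ?horner_exp ?expf_neq0 //.
exact: frac_deriv_cross.
Qed.

Lemma frac_derivn_at1 k p x : frac_derivn_at k p 1 x = p^`(k).[x].
Proof.
rewrite /frac_derivn_at /frac_value_at iter_frac_deriv_den expr1n hornerC invr1 mul1r.
congr (_.[x]); elim: k => //= k ->.
by rewrite iter_frac_deriv_den expr1n derivC mul1r mul0r subr0.
Qed.

Lemma dvdp_iter_frac_deriv k p q x : ('X - x%:P) ^+ k.+1 %| p ->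
  ('X - x%:P) %| (iter k frac_deriv (p, q)).1.
Proof.
elim: k p q => [|k IH] p q; first by rewrite expr1.
case/dvdpP=> r ->; rewrite iterSr; apply: IH.
rewrite /= derivM deriv_exp derivXsubC mul1r mulrDr -mulr_natl.
by rewrite !(dvdp_add, dvdpNr, dvdp_mull) // dvdp_exp2l.
Qed.

Lemma frac_derivn_at_eq0 k p q x : ('X - x%:P) ^+ k.+1 %| p ->
  frac_derivn_at k p q x = 0.
Proof.
move=> /(dvdp_iter_frac_deriv q) /polyXsubCP root_num.
by rewrite /frac_derivn_at /frac_value_at root_num mulr0.
Qed.

Lemma horner_derivn_XsubC_exp x j k :
  (('X - x%:P) ^+ j)^`(k).[x] = (j == k)%:R * k`!%:R.
Proof.
have -> : (('X - x%:P) ^+ j)^`(k) = ('X - x%:P) ^+ (j - k) *+ j ^_ k.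
  elim: k => [|k IH]; first by rewrite derivn0 subn0 ffactn0.
  rewrite derivnS IH derivMn deriv_exp derivXsubC mul1r ffactnSr subnS.
  by rewrite -mulrnA mulnC mulrnA.
rewrite hornerMn horner_exp hornerXsubC subrr.
case: (ltngtP j k) => [jk|kj|->]; last by rewrite subnn ffactnn expr0 mul1r.
  by rewrite ffact_small // mulr0n mul0r.
by rewrite expr0n subn_eq0 leqNgt kj mul0rn mul0r.
Qed.

Lemma horner_derivn_taylor x (d : nat -> F) k0 k : (k < k0)%N ->
  (\sum_(j < k0) ('X - x%:P) ^+ j * (d j)%:P)^`(k).[x] = k`!%:R * d k.
Proof.
move=> lt_k_k0; rewrite linear_sum horner_sum (bigD1 (Ordinal lt_k_k0)) //=.
rewrite big1 => [|j neq_jk];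
  rewrite mulrC mul_polyC derivnZ hornerZ horner_derivn_XsubC_exp.
  by rewrite eqxx mul1r addr0 mulrC.
suff /negbTE -> : (j != k :> nat) by rewrite mul0r mulr0.
by apply: contra neq_jk => /eqP jk; apply/eqP/val_inj.
Qed.

Lemma iter_rat_mx_deriv n k (M : 'M[{poly F}]_n) q :
  iter k (@rat_mx_deriv F n) (M, q) =
  (map_mx (fun p => (iter k frac_deriv (p, q)).1) M, q ^+ (2 ^ k)).
Proof.
elim: k => [|k IH]; first by rewrite map_mx_id ?expr1.
rewrite iterS IH /rat_mx_deriv /= -exprM expnSr; congr (_, _).
by apply/matrixP => a b; rewrite !mxE iter_frac_deriv_den.
Qed.

Lemma rat_mx_derivn_atE n k (M : 'M[{poly F}]_n) q x :
  rat_mx_derivn_at k M q x = map_mx (fun p => frac_derivn_at k p q x) M.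
Proof.
apply/matrixP => a b; rewrite /rat_mx_derivn_at iter_rat_mx_deriv !mxE.
by rewrite /frac_derivn_at /frac_value_at iter_frac_deriv_den.
Qed.
End FracDeriv.

Lemma dvdp_prod_coprime (F : fieldType) (I : finType) (r : I -> {poly F}) g :
  (forall i j, i != j -> coprimep (r i) (r j)) -> (forall i, r i %| g) ->
  \prod_i r i %| g.
Proof.
move=> r_coprime r_dvd; rewrite -big_enum /=.
elim: (enum I) (enum_uniq I) => [|i s IH] /=; first by rewrite big_nil dvd1p.
case/andP=> i_notin_s uniq_s; rewrite big_cons Gauss_dvdp ?r_dvd ?IH //.
rewrite (big_morph _ (fun a b => coprimepMr (r i) a b) (coprimep1 _)) big_all.
by apply/allP => j j_in_s; apply: r_coprime; apply: contraNneq i_notin_s => ->.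
Qed.

Lemma mulmx_cV_eq (F : fieldType) m n (M1 M2 : 'M[F]_(m, n)) :
  (forall v : 'cV_n, M1 *m v = M2 *m v) -> M1 = M2.
Proof.
move=> M12; apply: trmx_inj; apply/eqP/mulmxP => u.
by apply: trmx_inj; rewrite !trmx_mul !trmxK.
Qed.

Section SpectralProjection.
Variables (F : fieldType) (n' m : nat) (A : 'M[F]_n'.+1).
Variables (lam : 'I_m -> F) (ns : 'I_m -> nat).
Hypothesis lam_inj : injective lam.
Hypothesis char_poly_A : char_poly A = \prod_(j < m) ('X - (lam j)%:P) ^+ ns j.

Local Notation p j := (('X - (lam j)%:P) ^+ ns j).
Local Notation q j := (\prod_(k < m | k != j) p k).

Lemma char_poly_split j : char_poly A = p j * q j.
Proof. by rewrite char_poly_A (bigD1 j). Qed.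

Lemma horner_mx_mul_char_poly r : horner_mx A (r * char_poly A) = 0.
Proof. by rewrite rmorphM /= Cayley_Hamilton mulr0. Qed.

Lemma horner_mx_factor j : horner_mx A (p j) = (A - (lam j)%:M) ^+ ns j.
Proof. by rewrite rmorphXn rmorphB /= horner_mx_X horner_mx_C. Qed.

Lemma coprimep_factors j k : j != k -> coprimep (p j) (p k).
Proof.
move=> neq_jk; apply/coprimep_expl/coprimep_expr/coprimep_XsubC2.
by rewrite subr_eq0 (inj_eq lam_inj) eq_sym.
Qed.

Lemma coprimep_factor_cofactor j : coprimep (p j) (q j).
Proof.
apply: (big_ind (coprimep (p j))) => [|a b ca cb|k neq_kj].
- exact: coprimep1.
- by rewrite coprimepMr ca cb.
- by apply: coprimep_factors; rewrite eq_sym.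
Qed.

Lemma horner_cofactor_neq0 j : (q j).[lam j] != 0.
Proof.
rewrite horner_prod; apply/prodf_neq0 => k neq_kj.
by rewrite horner_exp hornerXsubC expf_neq0 // subr_eq0 (inj_eq lam_inj) eq_sym.
Qed.

Lemma horner_mx_sum_cofactors (u : 'I_m -> {poly F} * {poly F}) :
  (forall j, (u j).1 * p j + (u j).2 * q j = 1) ->
  horner_mx A (\sum_j (u j).2 * q j) = 1.
Proof.
move=> bezout_u.
have /dvdpP [r sum_u] : char_poly A %| \sum_j (u j).2 * q j - 1.
  rewrite char_poly_A; apply: dvdp_prod_coprime => [|j]; first exact: coprimep_factors.
  rewrite (bigD1 j) //=.
  have -> : (u j).2 * q j = 1 - (u j).1 * p j.
    by rewrite -[in RHS](bezout_u j) addrC addKr.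
  rewrite addrAC [1 - _ - 1]addrAC subrr add0r dvdp_add ?dvdpNr ?dvdp_mull //.
  apply: (big_ind (dvdp (p j))) => [|a b|k neq_kj]; [exact: dvdp0 | exact: dvdp_add |].
  by rewrite dvdp_mull // (bigD1 j) 1?eq_sym //= dvdp_mulr.
by rewrite -[\sum_j _](subrK 1) sum_u rmorphD /= horner_mx_mul_char_poly rmorph1 add0r.
Qed.

Lemma in_ker_pow_cofactor r j v :
  in_ker_pow A (lam j) (ns j) (horner_mx A (r * q j) *m v).
Proof.
rewrite /in_ker_pow mulmxA -horner_mx_factor mulmxE -rmorphM /=.
by rewrite mulrCA -char_poly_split horner_mx_mul_char_poly mul0mx.
Qed.

Section Projection.
Variables (i : 'I_m) (P : 'M[F]_n'.+1).
Hypothesis P_spectral : is_spectral_proj A lam ns i P.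

Lemma spectral_proj_poly :
  exists a b, a * p i + b * q i = 1 /\ P = horner_mx A (b * q i).
Proof.
have /fin_all_exists [u bezout_u] : forall j, exists u : {poly F} * {poly F},
    u.1 * p j + u.2 * q j = 1.
  by move=> j; apply/Bezout_eq1_coprimepP/coprimep_factor_cofactor.
have [P_id P_zero] := P_spectral.
exists (u i).1, (u i).2; split => //; apply: mulmx_cV_eq => v.
rewrite -{1}[v]mul1mx idmxE -(horner_mx_sum_cofactors bezout_u) rmorph_sum /=.
rewrite mulmx_suml mulmx_sumr (bigD1 i) //= [X in _ + X]big1 ?addr0.
  exact/P_id/in_ker_pow_cofactor.
by move=> j neq_ji; apply/P_zero/in_ker_pow_cofactor.
Qed.

Lemma spectral_proj_ker : (A - (lam i)%:M) ^+ ns i *m P = 0.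
Proof.
have [a [b [_ ->]]] := spectral_proj_poly.
rewrite -horner_mx_factor mulmxE -rmorphM /= mulrCA -char_poly_split.
exact: horner_mx_mul_char_poly.
Qed.

Lemma spectral_proj_coker : exists Y, 1 - P = (A - (lam i)%:M) ^+ ns i *m Y.
Proof.
have [a [b [bezout ->]]] := spectral_proj_poly.
exists (horner_mx A a); rewrite -horner_mx_factor mulmxE -rmorphM.
by rewrite -(rmorph1 (horner_mx A)) -rmorphB -{1}bezout addrK mulrC.
Qed.

Lemma spectral_proj_idem : P *m P = P.
Proof.
apply: mulmx_cV_eq => v; rewrite -mulmxA; apply: (proj1 P_spectral).
by rewrite /in_ker_pow mulmxA spectral_proj_ker mul0mx.
Qed.

End Projection.
End SpectralProjection.

Lemma char_poly_mx_shift (F : fieldType) n (A : 'M[F]_n) c :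
  char_poly_mx A = ('X - c%:P)%:M - map_mx polyC (A - c%:M).
Proof.
by rewrite /char_poly_mx map_mxB map_scalar_mx raddfB /= opprB addrA subrK.
Qed.

Section AdjugateExpansion.
Variables (F : fieldType) (n' : nat) (A : 'M[F]_n'.+1) (c : F) (k0 : nat).
Variables (q : {poly F}) (P Y : 'M[F]_n'.+1).
Hypothesis char_poly_A : char_poly A = ('X - c%:P) ^+ k0 * q.
Hypothesis P_ker : (A - c%:M) ^+ k0 *m P = 0.
Hypothesis P_coker : 1 - P = (A - c%:M) ^+ k0 *m Y.

Local Notation X1 := ('X - c%:P).
Local Notation N := (A - c%:M).

(* Q(z) = (z - c)^k0 (z - A)^-1 P, a polynomial since N^k0 P = 0. *)
Let Q := \sum_(j < k0) X1 ^+ j *: map_mx polyC (N ^+ (k0 - j.+1) *m P).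

Lemma char_poly_mx_mulQ : char_poly_mx A *m Q = X1 ^+ k0 *: map_mx polyC P.
Proof.
pose g j := X1 ^+ j *: map_mx polyC (N ^+ (k0 - j) *m P).
have telescope (j : 'I_k0) :
    char_poly_mx A *m (X1 ^+ j *: map_mx polyC (N ^+ (k0 - j.+1) *m P))
    = g j.+1 - g j.
  rewrite -scalemxAr (char_poly_mx_shift _ c) mulmxBl mul_scalar_mx -map_mxM.
  by rewrite scalerBr scalerA -exprSr mulmxA -[N *m _]/(N * _) -exprS subnSK.
rewrite mulmx_sumr (eq_bigr _ (fun j _ => telescope j)).
rewrite -(big_mkord xpredT (fun j => g j.+1 - g j)).
by rewrite telescope_sumr // /g subnn subn0 expr0 mul1mx P_ker map_mx0 scaler0 subr0.
Qed.

Lemma adj_char_poly_mx_mul_proj : q *: Q = \adj (char_poly_mx A) *m map_mx polyC P.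
Proof.
have X1k0_neq0 : X1 ^+ k0 != 0 by rewrite expf_neq0 // polyXsubC_eq0.
apply: (scalemx_inj X1k0_neq0); rewrite scalerA -char_poly_A -mul_scalar_mx.
by rewrite -mul_adj_mx -mulmxA char_poly_mx_mulQ scalemxAr.
Qed.

Lemma adj_char_poly_mx_mul_coproj :
  exists T, \adj (char_poly_mx A) * (1 - map_mx polyC P) = X1 ^+ k0 *: T.
Proof.
have [S XN_mul] : exists S, X1%:M ^+ k0 - map_mx polyC N ^+ k0 = char_poly_mx A * S.
  rewrite subrXX_comm; last by rewrite /GRing.comm -!mulmxE scalar_mxC.
  by rewrite -char_poly_mx_shift; eexists.
exists ((\adj (char_poly_mx A) - q *: S) * map_mx polyC Y).
have -> : 1 - map_mx polyC P = (X1%:M ^+ k0 - char_poly_mx A * S) * map_mx polyC Y.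
  by rewrite -XN_mul opprB subrKC -rmorphXn /= -[_ * _]map_mxM -P_coker map_mxB map_mx1.
have -> : X1%:M ^+ k0 = (X1 ^+ k0)%:M :> 'M_n'.+1 by rewrite rmorphXn.
rewrite mulrA mulrBr mulrA [\adj _ * char_poly_mx _]mul_adj_mx.
rewrite -[\det _]/(char_poly A) char_poly_A.
by rewrite -!mulmxE mul_mx_scalar mul_scalar_mx -scalerA -scalerBr scalemxAl.
Qed.

Lemma adj_char_poly_mx_decomp :
  exists T, \adj (char_poly_mx A) = q *: Q + X1 ^+ k0 *: T.
Proof.
have [T adj_coproj] := adj_char_poly_mx_mul_coproj.
by exists T; rewrite adj_char_poly_mx_mul_proj -adj_coproj -mulrDr addrC subrK mulr1.
Qed.

Hypothesis q_c_neq0 : q.[c] != 0.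

Lemma rat_mx_derivn_at_adj k : (k < k0)%N ->
  rat_mx_derivn_at k (\adj (char_poly_mx A)) q c = k`!%:R *: (N ^+ (k0 - k.+1) *m P).
Proof.
move=> lt_k_k0; have [T adjE] := adj_char_poly_mx_decomp.
apply/matrixP => a b; rewrite rat_mx_derivn_atE mxE [RHS]mxE.
have -> : \adj (char_poly_mx A) a b = q * Q a b + X1 ^+ k0 * T a b by rewrite adjE !mxE.
rewrite frac_derivn_atD (@frac_derivn_at_eq0 _ k (X1 ^+ k0 * T a b)) ?addr0; last first.
  by apply: dvdp_mulr; apply: dvdp_exp2l.
rewrite (@frac_derivn_at_cross _ _ _ _ (Q a b) 1) ?hornerC ?oner_neq0 //; last first.
  by rewrite mulr1 mulrC.
rewrite frac_derivn_at1 summxE.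
under eq_bigr => j _ do rewrite 2!mxE.
exact: (horner_derivn_taylor c (fun j => (N ^+ (k0 - j.+1) *m P) a b)).
Qed.

End AdjugateExpansion.

Unset Implicit Arguments.
Set Strict Implicit.

Theorem theorem5 (R : realType) (n m : nat) (A : 'M[R[i]]_n)
    (lam : 'I_m -> R[i]) (ns : 'I_m -> nat)
    (lam_inj : injective lam) (ns_pos : forall j, (0 < ns j)%N)
    (hchar : char_poly A = \prod_(j < m) ('X - (lam j)%:P) ^+ ns j)
    (i : 'I_m) (P : 'M[R[i]]_n)
    (hP : is_spectral_proj A lam ns i P) :
  let B := \adj (char_poly_mx A) in
  let q := \prod_(j < m | j != i) ('X - (lam j)%:P) ^+ ns j in
  let N := (A - (lam i)%:M) *m P in
  P = ((ns i).-1)`!%:R^-1 *: rat_mx_derivn_at (ns i).-1 B q (lam i) /\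
  ((2 <= ns i)%N ->
     N *m P = (ns i - 2)`!%:R^-1 *: rat_mx_derivn_at (ns i - 2) B q (lam i)).
Proof.
case: n => [|n'] in A P hchar hP *; first by split => [|_]; apply/matrixP => -[].
move=> B q N; rewrite {}/B {}/q {}/N.
have [Y P_coker] := spectral_proj_coker lam_inj hchar hP.
have expand := rat_mx_derivn_at_adj (char_poly_split hchar i)
  (spectral_proj_ker lam_inj hchar hP) P_coker (horner_cofactor_neq0 ns lam_inj i).
have fact_neq0 k : k`!%:R != 0 :> R[i] by rewrite pnatr_eq0 -lt0n fact_gt0.
split => [|two_le_ns].
  by rewrite expand ?prednK ?ltn_predL // subnn expr0 mul1mx scalerA mulVf ?scale1r.
rewrite -mulmxA (spectral_proj_idem lam_inj hchar hP).
rewrite expand; last by have := ns_pos i; lia.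
by rewrite (_ : ns i - (ns i - 2).+1 = 1)%N ?expr1 ?scalerA ?mulVf ?scale1r //; lia.
Qed.
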